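(* Assume the capacities satisfy (C1). Let $M_0$ be uniform on $\{1,\dots,N\}$ and $M_1,M_2,\dots$ i.i.d., independent of $M_0$, with $\mathbb P(M_v=m)=\lambda_m/l_N$, $1\le m\le N$, and set $Y_v=\mathbf 1\{\bigcup_{w=0}^{v-1}\{M_v=M_w\}\}$ for $v\ge1$. Then for each $\delta\in(-1/2,1/2)$, $u\ge0$ and $v\le N^{1/2+\delta}$, $$\mathbb P\Big(\sum_{w=1}^vY_w\ge N^u\Big)=O\big(N^{-(u-2\delta)}\big).$$
   Context: Capacities $\lambda_1,\dots,\lambda_N>0$ deterministic; $l_N=\sum_i\lambda_i$, $\mu_N=\frac1N\sum_i\lambda_i$, $\nu_N=\sum_i\lambda_i^2/\sum_i\lambda_i$. (C1): there are $\mu\in(0,\infty)$, $\nu\in(1,\infty)$, $\alpha_1>0$ with $|\mu_N-\mu|=O(N^{-\alpha_1})$ and $|\nu_N-\nu|=O(N^{-\alpha_1})$. *)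

From HB Require Import structures.
From mathcomp Require Import all_boot all_order all_algebra.
From mathcomp Require Import all_classical all_reals.
From mathcomp Require Import exp.
Set Implicit Arguments. Unset Strict Implicit. Unset Printing Implicit Defensive.
Import Order.TTheory GRing.Theory Num.Theory.
Local Open Scope ring_scope.

Section Defs.
Variable R : realType.
(* Capacities: for each N, lam N i (i < N) is the capacity lambda_{i+1}
   (indices shifted to 0..N-1). *)
Variable lam : nat -> nat -> R.

Definition l_N (N : nat) : R := \sum_(i < N) lam N i.
Definition mu_N (N : nat) : R := l_N N / N%:R.
Definition nu_N (N : nat) : R := (\sum_(i < N) lam N i ^+ 2) / l_N N.

(* Condition (C1), with O(.) read as: bounded by C * N^{-alpha1} for all
   large N. *)
Definition C1 : Prop :=
  exists (mu nu alpha1 : R), 0 < mu /\ 1 < nu /\ 0 < alpha1 /\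
    exists (C : R) (N0 : nat), forall N : nat, (N0 <= N)%N ->
      `|mu_N N - mu| <= C * (N%:R `^ (- alpha1)) /\
      `|nu_N N - nu| <= C * (N%:R `^ (- alpha1)).

(* A realisation (M_0, ..., M_v) of the first v+1 marks, values in 'I_N. *)
Definition Yind (N v : nat) (m : {ffun 'I_v.+1 -> 'I_N}) (w : 'I_v.+1) : nat :=
  [exists w' : 'I_v.+1, (w' < w)%N && (m w' == m w)].

Definition Ysum (N v : nat) (m : {ffun 'I_v.+1 -> 'I_N}) : nat :=
  (\sum_(w < v.+1 | (0 < w)%N) Yind m w)%N.

(* Probability of the realisation m: M_0 uniform on N points, M_1..M_v
   i.i.d. with P(M = i) = lam N i / l_N, all independent. *)
Definition path_weight (N v : nat) (m : {ffun 'I_v.+1 -> 'I_N}) : R :=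
  (N%:R)^-1 * \prod_(w < v.+1 | (0 < w)%N) (lam N (m w) / l_N N).

Definition collision_prob (N v : nat) (u : R) : R :=
  \sum_(m : {ffun 'I_v.+1 -> 'I_N} | N%:R `^ u <= (Ysum m)%:R) path_weight m.
End Defs.

(* By Markov's inequality it suffices to bound E[Y_1 + ... + Y_v].  Each Y_w
   is at most the number of w' < w with M_w' = M_w, so the expectation is at
   most the sum, over the at most v^2 pairs w' < w, of P(M_w' = M_w).  This
   probability is 1/N when w' = 0 (M_0 is uniform) and
   sum_i (lam_i / l_N)^2 = (nu_N / mu_N) / N otherwise; under (C1) the ratio
   nu_N / mu_N is eventually bounded.  Hence the expectation is
   O(v^2 / N) = O(N^(2 delta)) for v <= N^(1/2 + delta). *)

From HB Require Import structures.
From mathcomp Require Import all_boot all_order all_algebra.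
From mathcomp Require Import all_classical all_reals.
From mathcomp Require Import exp.
From mathcomp Require Import ring lra.
Set Implicit Arguments.
Unset Strict Implicit.
Unset Printing Implicit Defensive.
Import Order.TTheory GRing.Theory Num.Theory.
Local Open Scope ring_scope.

Lemma sum_ffun_coincide (R : comPzRingType) (I J : finType) (F : I -> J -> R)
    (a b : I) :
  a != b -> (forall i, i != a -> i != b -> \sum_k F i k = 1) ->
  \sum_(f : {ffun I -> J}) (f a == f b)%:R * \prod_i F i (f i)
  = \sum_j F a j * F b j.
Proof.
move=> ab F1.
(* [f a == f b] = sum_j [f a == j] [f b == j], and each summand factorises. *)
pose G j i k := F i k * (if i == a then (k == j)%:R else 1)
                      * (if i == b then (k == j)%:R else 1).
have GE (f : {ffun I -> J}) :
    (f a == f b)%:R * \prod_i F i (f i) = \sum_j \prod_i G j i (f i).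
  rewrite /G; under [in RHS]eq_bigr => j _ do
    rewrite !big_split /= -!big_mkcond !big_pred1_eq.
  rewrite (bigD1 (f a)) //= eqxx mulr1 [X in _ + X]big1 ?addr0.
    by rewrite eq_sym mulrC.
  by move=> j /negbTE; rewrite eq_sym => ->; rewrite mulr0 mul0r.
under eq_bigr do rewrite GE.
rewrite exchange_big /=.
apply: eq_bigr => j _.
rewrite -(bigA_distr_bigA (G j)) (bigD1 a) //= (bigD1 b) 1?eq_sym //=.
rewrite [X in _ * (_ * X)]big1 ?mulr1; last first.
  move=> i /andP[ia ib]; rewrite /G (negbTE ia) (negbTE ib).
  by under eq_bigr do rewrite !mulr1; exact: F1.
rewrite /G eqxx (negbTE ab) eq_sym (negbTE ab) eqxx.
rewrite (bigD1 j) //= big1 ?addr0 => [|k /negbTE ->]; last by rewrite mulr0 mulr1.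
rewrite (bigD1 j) //= big1 ?addr0 => [|k /negbTE ->]; last by rewrite mulr0.
by rewrite eqxx !mulr1.
Qed.

Lemma markov_sum (R : realFieldType) (I : finType) (p X : I -> R) (c : R) :
  0 < c -> (forall i, 0 <= p i) -> (forall i, 0 <= X i) ->
  \sum_(i | c <= X i) p i <= (\sum_i p i * X i) / c.
Proof.
move=> c_gt0 p_ge0 X_ge0; rewrite mulr_suml big_mkcond /=.
apply: ler_sum => i _; case: ifP => [cX|_].
- by rewrite -mulrA ler_peMr // ler_pdivlMr // mul1r.
- by rewrite divr_ge0 ?mulr_ge0 // ltW.
Qed.

Lemma sum1_ord_lt (n : nat) (w : 'I_n) : (\sum_(i < n | (i < w)%N) 1 = w)%N.
Proof.
by rewrite -(big_ord_widen n (fun=> 1%N) (ltnW (ltn_ord w))) sum1_card card_ord.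
Qed.

Lemma sum_ordered_pairs_le (R : numDomainType) (v : nat)
    (F : 'I_v.+1 -> 'I_v.+1 -> R) (c : R) :
  0 <= c -> (forall a b : 'I_v.+1, (a < b)%N -> F a b <= c) ->
  \sum_(b < v.+1 | (0 < b)%N) \sum_(a < v.+1 | (a < b)%N) F a b
  <= (v * v)%:R * c.
Proof.
move=> c_ge0 Fc.
have sum_const (P : pred 'I_v.+1) (x : R) :
    \sum_(i | P i) x = (\sum_(i | P i) 1)%N%:R * x.
  by rewrite natr_sum mulr_suml; under [RHS]eq_bigr do rewrite mul1r.
apply: (@le_trans _ _ (\sum_(b < v.+1 | (0 < b)%N) (v%:R * c))).
  apply: ler_sum => b _; apply: (@le_trans _ _ (\sum_(a < v.+1 | (a < b)%N) c)).
    by apply: ler_sum => a; apply: Fc.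
  by rewrite sum_const ler_wpM2r // ler_nat sum1_ord_lt -ltnS.
rewrite sum_const big_mkcond big_ord_recl /= add0n sum1_card card_ord.
by rewrite natrM mulrA.
Qed.

Lemma Ysum_le_coincidences (N v : nat) (m : {ffun 'I_v.+1 -> 'I_N}) :
  (Ysum m <= \sum_(b < v.+1 | (0 < b)%N)
               \sum_(a < v.+1 | (a < b)%N) (m a == m b))%N.
Proof.
apply: leq_sum => b _; rewrite /Yind.
case: existsP => [[a /andP[ab mab]]|_] //=.
by rewrite (bigD1 a) //= mab.
Qed.

Lemma mulr_powRN_eventually_le (R : realType) (C a e : R) : 0 < a -> 0 < e ->
  exists N1 : nat, forall N : nat, (N1 <= N)%N -> C * N%:R `^ (- a) <= e.
Proof.
move=> a_gt0 e_gt0.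
pose B := (`|C| / e) `^ a^-1.
exists (Num.Def.archi_bound B).+1 => N hN.
have B_lt : B < N%:R.
  by apply: lt_le_trans (archi_boundP (powR_ge0 _ _)) _; rewrite ler_nat ltnW.
have N_gt0 : 0 < N%:R :> R := le_lt_trans (powR_ge0 _ _) B_lt.
have Ce_le : `|C| / e <= N%:R `^ a.
  have -> : `|C| / e = B `^ a.
    by rewrite /B -powRrM mulVf ?gt_eqF // powRr1 // divr_ge0 // ltW.
  by apply: ge0_ler_powR; rewrite ?nnegrE ?powR_ge0 ?ltW.
rewrite powRN; apply: le_trans (ler_wpM2r _ (ler_norm C)) _.
  by rewrite invr_ge0 powR_ge0.
by rewrite -/(_ / _) ler_pdivrMr ?powR_gt0 // -ler_pdivrMl // mulrC.
Qed.

Lemma C1_nu_mu_bounded (R : realType) (lam : nat -> nat -> R) : C1 lam ->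
  exists (K : R) (N0 : nat), (0 < N0)%N /\
    forall N, (N0 <= N)%N -> nu_N lam N / mu_N lam N <= K.
Proof.
move=> [mu [nu [a [mu_gt0 [nu_gt1 [a_gt0 [C [N0 HC]]]]]]]].
have e_gt0 : 0 < Num.min 1 (mu / 2) by rewrite lt_min ltr01 divr_gt0.
have [N1 HN1] := mulr_powRN_eventually_le C a_gt0 e_gt0.
exists (2 * (nu + 1) / mu), (maxn N0 N1).+1; split=> // N.
rewrite gtn_max => /andP[/ltnW /HC[dmu dnu] /ltnW /HN1].
rewrite le_min => /andP[small1 small2].
have mu_ge : mu / 2 <= mu_N lam N by move: dmu; rewrite ler_norml => /andP[]; lra.
have nu_le : nu_N lam N <= nu + 1 by move: dnu; rewrite ler_norml => /andP[]; lra.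
have Kmu : 2 * (nu + 1) / mu * (mu / 2) = nu + 1 by field; rewrite gt_eqF.
rewrite ler_pdivrMr; last by lra.
apply: le_trans nu_le _; rewrite -[X in X <= _]Kmu ler_wpM2l //.
by rewrite divr_ge0 ?ltW //; lra.
Qed.

Section Marks.
Variables (R : realType) (lam : nat -> nat -> R) (N v : nat).
Hypothesis lam_gt0 : forall i : 'I_N, 0 < lam N i.
Hypothesis N_gt0 : (0 < N)%N.

Lemma l_N_gt0 : 0 < l_N lam N.
Proof.
rewrite /l_N (bigD1 (Ordinal N_gt0)) //=.
apply: lt_le_trans (lam_gt0 (Ordinal N_gt0)) _.
by rewrite lerDl sumr_ge0 // => i _; apply/ltW.
Qed.

Lemma mu_N_gt0 : 0 < mu_N lam N.
Proof. by rewrite divr_gt0 ?l_N_gt0 ?ltr0n. Qed.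

Lemma nu_N_ge0 : 0 <= nu_N lam N.
Proof. by rewrite divr_ge0 ?(ltW l_N_gt0) ?sumr_ge0 // => i _; apply: sqr_ge0. Qed.

Definition mark_law (w : 'I_v.+1) (k : 'I_N) : R :=
  if w == ord0 then N%:R^-1 else lam N k / l_N lam N.

Lemma mark_law_ge0 w k : 0 <= mark_law w k.
Proof.
rewrite /mark_law; case: ifP => _; first by rewrite invr_ge0.
by rewrite divr_ge0 ?ltW ?l_N_gt0.
Qed.

Lemma sum_mark_law w : \sum_k mark_law w k = 1.
Proof.
rewrite /mark_law; case: (w == ord0).
  by rewrite sumr_const card_ord -[LHS]mulr_natr mulVf // pnatr_eq0 -lt0n.
by rewrite -mulr_suml mulfV ?gt_eqF ?l_N_gt0.
Qed.

Lemma path_weightE (m : {ffun 'I_v.+1 -> 'I_N}) :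
  path_weight lam m = \prod_w mark_law w (m w).
Proof.
rewrite /path_weight [RHS](bigD1 ord0) //= /mark_law eqxx; congr (_ * _).
by apply: eq_big => [|]; case=> -[].
Qed.

Lemma path_weight_ge0 (m : {ffun 'I_v.+1 -> 'I_N}) : 0 <= path_weight lam m.
Proof. by rewrite path_weightE prodr_ge0 // => w _; apply: mark_law_ge0. Qed.

Let rho := nu_N lam N / mu_N lam N.

Lemma rho_ge0 : 0 <= rho.
Proof. by rewrite divr_ge0 ?nu_N_ge0 ?ltW ?mu_N_gt0. Qed.

Lemma coincidence_prob_le (a b : 'I_v.+1) : (a < b)%N ->
  \sum_(m : {ffun 'I_v.+1 -> 'I_N}) (m a == m b)%:R * path_weight lam m
  <= (1 + rho) / N%:R.
Proof.
move=> ab; under eq_bigr do rewrite path_weightE.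
have a_neq_b : a != b by rewrite neq_ltn ab.
rewrite (sum_ffun_coincide a_neq_b (fun i _ _ => sum_mark_law i)).
have b0 : (b == ord0) = false by apply/eqP => b0; rewrite b0 in ab.
have N_inv_ge0 : 0 <= N%:R^-1 :> R by rewrite invr_ge0.
rewrite /mark_law b0; case: (a == ord0).
  have := sum_mark_law b; rewrite /mark_law b0 => lam_sum1.
  by rewrite -mulr_sumr lam_sum1 mulr1 mulrC ler_peMr // lerDl rho_ge0.
rewrite (_ : \sum_j _ = rho / N%:R); first by rewrite ler_wpM2r // lerDr.
rewrite /rho /nu_N /mu_N; move: l_N_gt0; move: (l_N lam N) => l l_gt0.
rewrite !mulr_suml; apply: eq_bigr => j _.
by field; rewrite pnatr_eq0 -lt0n N_gt0 gt_eqF.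
Qed.

Lemma expected_Ysum_le :
  \sum_(m : {ffun 'I_v.+1 -> 'I_N}) path_weight lam m * (Ysum m)%:R
  <= (v * v)%:R * ((1 + rho) / N%:R).
Proof.
apply: (@le_trans _ _ (\sum_(m : {ffun 'I_v.+1 -> 'I_N})
    \sum_(b < v.+1 | (0 < b)%N) \sum_(a < v.+1 | (a < b)%N)
      (m a == m b)%:R * path_weight lam m)).
  apply: ler_sum => m _; rewrite mulrC.
  have := Ysum_le_coincidences m; rewrite -(ler_nat R).
  move=> /(ler_wpM2r (path_weight_ge0 m)) /le_trans; apply.
  by rewrite natr_sum mulr_suml; under eq_bigr do rewrite natr_sum mulr_suml.
rewrite exchange_big /=; under eq_bigr do rewrite exchange_big /=.
apply: sum_ordered_pairs_le; last exact: coincidence_prob_le.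
by rewrite divr_ge0 ?addr_ge0 ?rho_ge0.
Qed.

Lemma collision_prob_le (u : R) :
  collision_prob lam N v u <= (v * v)%:R * ((1 + rho) / N%:R) / N%:R `^ u.
Proof.
apply: le_trans (markov_sum _ _ _) _.
- by rewrite powR_gt0 ?ltr0n.
- exact: path_weight_ge0.
- by [].
by rewrite ler_wpM2r ?invr_ge0 ?powR_ge0 ?expected_Ysum_le.
Qed.

End Marks.

Theorem lemmaD3 (R : realType) (lam : nat -> nat -> R)
  (Hpos : forall (N i : nat), (i < N)%N -> 0 < lam N i)
  (HC1 : C1 lam) (delta u : R)
  (Hdelta : - (1 / 2) < delta < 1 / 2) (Hu : 0 <= u) :
  exists (C : R) (N0 : nat), forall N v : nat, (N0 <= N)%N ->
    v%:R <= N%:R `^ (1 / 2 + delta) ->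
    collision_prob lam N v u <= C * N%:R `^ (- (u - 2 * delta)).
Proof.
have [K [N0 [N0_gt0 rho_le]]] := C1_nu_mu_bounded HC1.
exists (1 + K), N0 => N v N0_le v_le.
have N_gt0 := leq_trans N0_gt0 N0_le.
have NR_neq0 : N%:R != 0 :> R by rewrite pnatr_eq0 -lt0n.
have lam_gt0 (i : 'I_N) : 0 < lam N i := Hpos N i (ltn_ord i).
apply: le_trans (collision_prob_le v lam_gt0 N_gt0 u) _.
have vv_le : (v * v)%:R <= N%:R `^ (1 + 2 * delta) :> R.
  rewrite natrM (_ : 1 + 2 * delta = (1 / 2 + delta) + (1 / 2 + delta)).
    by rewrite powRD ?NR_neq0 ?implybT // ler_pM.
  by lra.
have -> : (1 + K) * N%:R `^ (- (u - 2 * delta))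
          = N%:R `^ (1 + 2 * delta) * ((1 + K) / N%:R) / N%:R `^ u.
  rewrite (_ : - (u - 2 * delta) = (1 + 2 * delta) + (- 1 + - u)); last by lra.
  rewrite !powRD ?NR_neq0 ?implybT // powR_inv1 // powRN.
  by field; rewrite NR_neq0 gt_eqF ?powR_gt0 ?ltr0n.
rewrite ler_wpM2r ?invr_ge0 ?powR_ge0 // ler_pM //.
  by rewrite divr_ge0 ?addr_ge0 ?(rho_ge0 lam_gt0 N_gt0).
by rewrite ler_pM2r ?invr_gt0 ?ltr0n // lerD2l rho_le.
Qed.
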